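(* Fix $-1<\xi_1<\xi_2<\xi_3<1$. As $(s,t)\to(0,0)$ with $s,t>0$, $$P(s,t)-P(0,0)=\frac{1}{2\sqrt{1-\xi_2}\sqrt{1+\xi_2}\sqrt{\xi_3-\xi_2}}\,t\ln\frac1t+o\!\left(t\ln\frac1t\right)+O(s).$$
   Context: Fix $-1<\xi_1<\xi_2<\xi_3<1$. For real $y$, $\sqrt y$ denotes the principal branch: $\sqrt y\ge0$ for $y\ge0$ and $\sqrt y=i\sqrt{|y|}$ for $y<0$. For small $s,t\ge 0$ let $$g_{s,t}(x)=\frac{\sqrt{x-\xi_1+s}\,\sqrt{x-\xi_2+t}}{\sqrt{x-1}\sqrt{x+1}\sqrt{x-\xi_1}\sqrt{x-\xi_2}\sqrt{x-\xi_3}},$$ and define $A(s,t)=-i\int_{-\infty}^{-1}g_{s,t}\,dx$, $B(s,t)=-i\int_{\xi_1-s}^{\xi_1}g_{s,t}\,dx$, $C(s,t)=-i\int_{\xi_2-t}^{\xi_2}g_{s,t}\,dx$, $P(s,t)=-\int_{\xi_2}^{\xi_3}g_{s,t}\,dx$, $Q(s,t)=-\int_{\xi_1}^{\xi_2-t}g_{s,t}\,dx$, and $1/J(s,t)=\int_1^{\infty}g_{s,t}\,dx$ (all these are real). Notation: $h=O(g)$ means $|h/g|$ is bounded near $(0,0)$, and $h=o(g)$ means $h/g\to0$ as $(s,t)\to(0,0)$. *)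

From Stdlib Require Import Reals.
From Coquelicot Require Import Coquelicot.
Open Scope R_scope.

Definition csqrt (y : R) : C :=
  if Rle_dec 0 y then RtoC (sqrt y) else (0, sqrt (- y)).

Definition g (xi1 xi2 xi3 s t x : R) : C :=
  Cdiv (Cmult (csqrt (x - xi1 + s)) (csqrt (x - xi2 + t)))
       (Cmult (Cmult (Cmult (Cmult (csqrt (x - 1)) (csqrt (x + 1)))
                            (csqrt (x - xi1))) (csqrt (x - xi2)))
              (csqrt (x - xi3))).

(* P(s,t) = - \int_{xi2}^{xi3} g_{s,t}(x) dx  (improper Riemann integral,
   the integrand having integrable singularities at the endpoints). *)
Definition P (xi1 xi2 xi3 s t : R) : C :=
  Copp (@RInt_gen C_R_CompleteNormedModule (g xi1 xi2 xi3 s t) (at_right xi2) (at_left xi3)).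

(* On (xi2, xi3) the integrand g is minus a real function, and the substitution
   x = xi2 + (xi3 - xi2) sin^2 th absorbs both endpoint singularities:
   P(s,t) = int_0^(pi/2) F_{s,t}, with F_{s,t}(th) = 2 w_s(x(th)) sqrt((xi3 - xi2) sin^2 th + t)
   and w_s smooth and Lipschitz in s; this gives the O(s) term.
   For s = 0, F_{0,t} - F_{0,0} = Psi * d/dth H_t(sqrt(xi3 - xi2) sin th), where
   H_t(y) = (y sqrt(y^2 + t) + t ln(y + sqrt(y^2 + t)) - y^2) / 2 and Psi is continuous at 0.
   As H_t(0) = -(t/4) ln(1/t) while H_t(y0) = O(t) for fixed y0 > 0, and the increment is
   O(t) away from th = 0, the t-increment is Psi(0)/4 * t ln(1/t) + o(t ln(1/t)), and
   Psi(0)/4 is the stated constant. *)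

From Stdlib Require Import Reals Lra.
From Coquelicot Require Import Coquelicot.
Open Scope R_scope.

Lemma csqrt_nonneg y : 0 <= y -> csqrt y = RtoC (sqrt y).
Proof. intros H; unfold csqrt; destruct (Rle_dec 0 y); [reflexivity | lra]. Qed.

Lemma csqrt_neg y : y < 0 -> csqrt y = (0, sqrt (- y)).
Proof. intros H; unfold csqrt; destruct (Rle_dec 0 y); [lra | reflexivity]. Qed.

Lemma sqrt_add_sub_le u h b :
  0 <= u -> 0 <= h -> 0 < b -> b <= sqrt u -> sqrt (u + h) - sqrt u <= h / b.
Proof.
  intros Hu Hh Hb Hbu.
  assert (Hmono : sqrt u <= sqrt (u + h)) by (apply sqrt_le_1_alt; lra).
  assert (Hprod : (sqrt (u + h) - sqrt u) * (sqrt (u + h) + sqrt u) = h).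
  { ring_simplify. rewrite !pow2_sqrt by lra. ring. }
  apply (Rmult_le_reg_r b); [lra |].
  replace (h / b * b) with h by (field; lra). nra.
Qed.

Lemma sqrt_mult_square c y : 0 <= c -> 0 <= y -> sqrt (c * y ^ 2) = sqrt c * y.
Proof. intros Hc Hy. rewrite sqrt_mult, sqrt_pow2 by (try apply pow2_ge_0; lra). reflexivity. Qed.

Lemma continuous_bounded (f : R -> R) a b :
  a <= b -> (forall x, a <= x <= b -> continuous f x) ->
  exists M, 0 < M /\ forall x, a <= x <= b -> Rabs (f x) <= M.
Proof.
  intros Hab Hf.
  destruct (continuity_ab_maj (fun x => Rabs (f x)) a b Hab) as [xm [Hm _]].
  { intros x Hx. apply continuity_pt_filterlim, (continuous_Rabs_comp f), Hf, Hx. }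
  exists (Rabs (f xm) + 1). split; [pose proof (Rabs_pos (f xm)); lra |].
  intros x Hx. specialize (Hm x Hx). simpl in Hm. lra.
Qed.

Lemma is_RInt_RtoC (f : R -> R) a b l : is_RInt f a b l ->
  is_RInt (V := C_R_NormedModule) (fun x => RtoC (f x)) a b (RtoC l).
Proof.
  intros Hf.
  apply (is_RInt_fct_extend_pair (U := R_NormedModule) (V := R_NormedModule)); [exact Hf |].
  pose proof (is_RInt_const (V := R_NormedModule) a b 0) as H0.
  replace (scal (b - a) (0 : R_NormedModule)) with (0 : R) in H0
    by (unfold scal; simpl; unfold mult; simpl; ring).
  exact H0.
Qed.

Lemma is_RInt_gen_at_right_at_left {V : NormedModule R_AbsRing} (f : R -> V) a b l :
  (forall eps : posreal, exists d : posreal, forall a' b', a < a' < a + d -> b - d < b' < b ->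
     exists v, is_RInt f a' b' v /\ norm (minus v l) < eps) ->
  is_RInt_gen f (at_right a) (at_left b) l.
Proof.
  intros Happrox P [eps Heps]. destruct (Happrox eps) as [d Hd].
  apply (Filter_prod _ _ _ (fun a' => a < a' < a + d) (fun b' => b - d < b' < b)).
  - exists d. intros y Hy Hay. apply Rabs_lt_between' in Hy. lra.
  - exists d. intros y Hy Hyb. apply Rabs_lt_between' in Hy. lra.
  - intros a' b' Ha' Hb'. destruct (Hd a' b' Ha' Hb') as [v [Hv Hvl]].
    exists v. split; [exact Hv | apply Heps, norm_compat1, Hvl].
Qed.

Lemma sin_square_onto v e :
  0 < e <= PI / 2 -> 0 < v < sin e ^ 2 -> exists th, 0 < th < e /\ sin th ^ 2 = v.
Proof.
  intros He Hv. pose proof PI_RGT_0.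
  assert (Hse : 0 < sin e) by (apply sin_gt_0; lra).
  assert (Hse1 : sin e <= 1) by apply SIN_bound.
  assert (Hsv : 0 < sqrt v < 1).
  { split; [apply sqrt_lt_R0; lra |].
    rewrite <- sqrt_1. apply sqrt_lt_1_alt. nra. }
  exists (asin (sqrt v)).
  pose proof (asin_bound (sqrt v)) as Hb.
  assert (Hs : sin (asin (sqrt v)) = sqrt v) by (apply sin_asin; lra).
  split; [split |].
  - destruct (Rle_dec (asin (sqrt v)) 0) as [Hle|]; [| lra].
    assert (sin (asin (sqrt v)) <= sin 0) by (apply sin_incr_1; lra).
    rewrite sin_0 in *. lra.
  - destruct (Rle_dec e (asin (sqrt v))) as [Hle|]; [| lra].
    assert (sin e <= sin (asin (sqrt v))) by (apply sin_incr_1; lra).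
    rewrite Hs in *. assert (sin e ^ 2 <= sqrt v ^ 2) by (apply pow_incr; lra).
    rewrite pow2_sqrt in *; lra.
  - rewrite Hs. apply pow2_sqrt. lra.
Qed.

Definition gap_primitive t y :=
  (y * sqrt (y ^ 2 + t) + t * ln (y + sqrt (y ^ 2 + t)) - y ^ 2) / 2.

Lemma is_derive_gap_primitive t y :
  0 < t -> is_derive (gap_primitive t) y (sqrt (y ^ 2 + t) - y).
Proof.
  intros Ht.
  assert (Habs : Rabs y < sqrt (y ^ 2 + t)).
  { rewrite <- sqrt_Rsqr_abs. apply sqrt_lt_1_alt. unfold Rsqr. split; nra. }
  pose proof (Rle_abs y). pose proof (Rle_abs (- y)). rewrite Rabs_Ropp in *.
  assert (Hsq : sqrt (y ^ 2 + t) * sqrt (y ^ 2 + t) = y ^ 2 + t) by (apply sqrt_sqrt; nra).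
  unfold gap_primitive. auto_derive; replace (y * (y * 1)) with (y ^ 2) by ring.
  - pose proof (pow2_ge_0 y). repeat split; lra.
  - set (u := sqrt (y ^ 2 + t)) in *. replace t with (u * u - y ^ 2) by lra. field. lra.
Qed.

Lemma gap_primitive_0 t : 0 < t -> gap_primitive t 0 = - (t / 4 * ln (/ t)).
Proof.
  intros Ht. unfold gap_primitive.
  replace (0 ^ 2 + t) with t by ring. rewrite Rplus_0_l, ln_Rinv by lra.
  assert (Hln : ln t = 2 * ln (sqrt t)).
  { rewrite <- (sqrt_sqrt t) at 1 by lra. rewrite ln_mult by (apply sqrt_lt_R0; lra). ring. }
  rewrite Hln. field.
Qed.

Lemma gap_primitive_bound y0 :
  0 < y0 -> exists C, forall t, 0 < t <= 1 -> Rabs (gap_primitive t y0) <= C * t.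
Proof.
  intros Hy0.
  set (Lg := Rabs (ln y0) + Rabs (ln (y0 + sqrt (y0 ^ 2 + 1)))).
  assert (HLg : 0 <= Lg) by (unfold Lg; pose proof (Rabs_pos (ln y0));
    pose proof (Rabs_pos (ln (y0 + sqrt (y0 ^ 2 + 1)))); lra).
  exists ((1 + Lg) / 2).
  intros t [Ht Ht1]. unfold gap_primitive.
  set (u := sqrt (y0 ^ 2 + t)).
  assert (Hu2 : u * u = y0 ^ 2 + t) by (apply sqrt_sqrt; pose proof (pow2_ge_0 y0); lra).
  assert (Hu0 : 0 <= u) by apply sqrt_pos.
  assert (Hu1 : u <= sqrt (y0 ^ 2 + 1)) by (apply sqrt_le_1_alt; lra).
  assert (Hlin : 0 <= y0 * u - y0 ^ 2 <= t) by (split; nra).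
  assert (Hln : Rabs (ln (y0 + u)) <= Lg).
  { assert (ln y0 <= ln (y0 + u)) by (apply ln_le; lra).
    assert (ln (y0 + u) <= ln (y0 + sqrt (y0 ^ 2 + 1))) by (apply ln_le; nra).
    unfold Lg. apply Rabs_le.
    pose proof (Rle_abs (ln (y0 + sqrt (y0 ^ 2 + 1)))). pose proof (Rle_abs (- ln y0)).
    pose proof (Rabs_pos (ln y0)). pose proof (Rabs_pos (ln (y0 + sqrt (y0 ^ 2 + 1)))).
    rewrite Rabs_Ropp in *. split; lra. }
  replace ((y0 * u + t * ln (y0 + u) - y0 ^ 2) / 2)
    with (((y0 * u - y0 ^ 2) + t * ln (y0 + u)) / 2) by lra.
  unfold Rdiv. rewrite Rabs_mult, (Rabs_pos_eq (/ 2)) by lra.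
  eapply Rle_trans; [apply Rmult_le_compat_r; [lra | apply Rabs_triang] |].
  rewrite Rabs_mult, (Rabs_pos_eq (y0 * u - y0 ^ 2)), (Rabs_pos_eq t) by lra.
  assert (t * Rabs (ln (y0 + u)) <= t * Lg) by (apply Rmult_le_compat_l; lra).
  lra.
Qed.

Definition sin_gap c t th := (sqrt (c * sin th ^ 2 + t) - sqrt c * sin th) * (sqrt c * cos th).

Lemma sin_gap_nonneg c t th :
  0 <= c -> 0 <= t -> 0 <= sin th -> 0 <= cos th -> 0 <= sin_gap c t th.
Proof.
  intros Hc Ht Hs Hco. unfold sin_gap. apply Rmult_le_pos.
  - rewrite <- sqrt_mult_square by lra.
    assert (sqrt (c * sin th ^ 2) <= sqrt (c * sin th ^ 2 + t)) by (apply sqrt_le_1_alt; lra).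
    lra.
  - apply Rmult_le_pos; [apply sqrt_pos | lra].
Qed.

Lemma continuous_sin_gap c t th : 0 < c -> 0 < t -> continuous (sin_gap c t) th.
Proof.
  intros Hc Ht. apply (ex_derive_continuous (sin_gap c t)). unfold sin_gap. auto_derive.
  pose proof (pow2_ge_0 (sin th)). simpl in *. repeat split; nra.
Qed.

Lemma is_RInt_sin_gap c t a b : 0 < c -> 0 < t ->
  is_RInt (sin_gap c t) a b
    (gap_primitive t (sqrt c * sin b) - gap_primitive t (sqrt c * sin a)).
Proof.
  intros Hc Ht.
  apply (is_RInt_derive (fun th => gap_primitive t (sqrt c * sin th))); intros th _;
    [| apply continuous_sin_gap; assumption].
  assert (Hsin : is_derive (fun th => sqrt c * sin th) th (sqrt c * cos th))
    by (auto_derive; [auto | ring]).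
  pose proof (is_derive_comp _ _ th _ _ (is_derive_gap_primitive t (sqrt c * sin th) Ht) Hsin)
    as Hcomp.
  replace (sin_gap c t th)
    with (scal (sqrt c * cos th) (sqrt ((sqrt c * sin th) ^ 2 + t) - sqrt c * sin th));
    [exact Hcomp |].
  rewrite Rpow_mult_distr, pow2_sqrt by lra.
  unfold sin_gap, scal; simpl; unfold mult; simpl. ring.
Qed.

Lemma RInt_subinterval_error (f : R -> R) a a' b' b M :
  a <= a' <= b' -> b' <= b -> ex_RInt f a b -> (forall x, a <= x <= b -> Rabs (f x) <= M) ->
  Rabs (RInt f a' b' - RInt f a b) <= (a' - a + (b - b')) * M.
Proof.
  intros Ha Hb Hab HM.
  assert (Ha'b : ex_RInt f a' b)
    by (apply (ex_RInt_Chasles_2 (V := R_CompleteNormedModule)) with a; [lra | exact Hab]).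
  assert (Haa' : ex_RInt f a a')
    by (apply (ex_RInt_Chasles_1 (V := R_CompleteNormedModule)) with b; [lra | exact Hab]).
  assert (Ha'b' : ex_RInt f a' b')
    by (apply (ex_RInt_Chasles_1 (V := R_CompleteNormedModule)) with b; [lra | exact Ha'b]).
  assert (Hb'b : ex_RInt f b' b)
    by (apply (ex_RInt_Chasles_2 (V := R_CompleteNormedModule)) with a'; [lra | exact Ha'b]).
  pose proof (RInt_Chasles (V := R_CompleteNormedModule) f a a' b Haa' Ha'b) as H1.
  pose proof (RInt_Chasles (V := R_CompleteNormedModule) f a' b' b Ha'b' Hb'b) as H2.
  simpl in H1, H2. unfold plus in H1, H2; simpl in H1, H2.
  assert (Rabs (RInt f a a') <= (a' - a) * M)
    by (apply abs_RInt_le_const; [lra | exact Haa' | intros; apply HM; lra]).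
  assert (Rabs (RInt f b' b) <= (b - b') * M)
    by (apply abs_RInt_le_const; [lra | exact Hb'b | intros; apply HM; lra]).
  replace (RInt f a' b' - RInt f a b) with (- (RInt f a a' + RInt f b' b)) by lra.
  rewrite Rabs_Ropp. pose proof (Rabs_triang (RInt f a a') (RInt f b' b)). lra.
Qed.

Lemma RInt_mult_approx (w h : R -> R) p eps a b D :
  a <= b -> is_RInt h a b D ->
  (forall x, a <= x <= b -> continuous w x /\ continuous h x) ->
  (forall x, a <= x <= b -> 0 <= h x /\ Rabs (w x - p) <= eps) ->
  Rabs (RInt (fun x => w x * h x) a b - p * D) <= eps * D.
Proof.
  intros Hab Hh Hcont Happrox.
  assert (Hex : forall k : R -> R, (forall x, a <= x <= b -> continuous k x) -> ex_RInt k a b)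
    by (intros k Hk; apply (ex_RInt_continuous (V := R_CompleteNormedModule)); intros x Hx;
        apply Hk; rewrite Rmin_left, Rmax_right in Hx; lra).
  assert (Hcw : forall x, a <= x <= b -> continuous (fun x => (w x - p) * h x) x).
  { intros x Hx. destruct (Hcont x Hx).
    apply (continuous_mult (fun x => w x - p) h); [| assumption].
    apply (continuous_minus (V := R_NormedModule)); [assumption | apply continuous_const]. }
  assert (Herr : is_RInt (fun x => (w x - p) * h x) a b (RInt (fun x => w x * h x) a b - p * D)).
  { apply (is_RInt_ext (fun x => minus (w x * h x) (scal p (h x)))).
    { intros x _. unfold minus, plus, opp, scal; simpl; unfold mult; simpl. ring. }
    apply (is_RInt_minus (V := R_NormedModule)); [| now apply (is_RInt_scal (V := R_NormedModule))].
    apply (RInt_correct (V := R_CompleteNormedModule)), Hex.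
    intros x Hx. destruct (Hcont x Hx). now apply (continuous_mult w h). }
  rewrite <- (is_RInt_unique _ _ _ _ Herr).
  eapply Rle_trans; [apply abs_RInt_le; [exact Hab | now apply Hex] |].
  rewrite <- (is_RInt_unique _ _ _ _ Hh).
  rewrite <- (RInt_scal (V := R_CompleteNormedModule)) by (exists D; exact Hh).
  apply RInt_le; [exact Hab | | |].
  - apply Hex. intros x Hx. apply (continuous_Rabs_comp (fun x => (w x - p) * h x)), Hcw, Hx.
  - apply (ex_RInt_scal (V := R_NormedModule)). exists D. exact Hh.
  - intros x Hx. destruct (Happrox x ltac:(lra)) as [Hh0 Hw].
    unfold scal; simpl; unfold mult; simpl.
    rewrite Rabs_mult, (Rabs_pos_eq (h x)) by exact Hh0.
    now apply Rmult_le_compat_r.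
Qed.

Lemma little_o_t_ln (f : R -> R) :
  (forall eps, 0 < eps -> exists A,
     forall t, 0 < t <= 1 -> Rabs (f t) <= eps * (t * ln (/ t)) + A * t) ->
  forall eps, 0 < eps -> exists eta, 0 < eta /\
    forall t, 0 < t < eta -> Rabs (f t) <= eps * (t * ln (/ t)).
Proof.
  intros Hf eps Heps. destruct (Hf (eps / 2) ltac:(lra)) as [A HA].
  set (Lam := 2 * Rabs A / eps).
  exists (Rmin 1 (exp (- Lam))). split; [apply Rmin_pos; [lra | apply exp_pos] |].
  intros t [Ht Heta].
  pose proof (Rmin_l 1 (exp (- Lam))). pose proof (Rmin_r 1 (exp (- Lam))).
  assert (HL : Lam < ln (/ t)).
  { rewrite ln_Rinv by lra.
    enough (ln t < ln (exp (- Lam))) by (rewrite ln_exp in *; lra). apply ln_increasing; lra. }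
  assert (HAt : A * t <= eps / 2 * (t * ln (/ t))).
  { apply (Rle_trans _ (Rabs A * t)); [apply Rmult_le_compat_r; [lra | apply Rle_abs] |].
    replace (Rabs A * t) with (eps / 2 * (t * Lam)) by (unfold Lam; field; lra).
    apply Rmult_le_compat_l; [lra |]. apply Rmult_le_compat_l; lra. }
  specialize (HA t ltac:(lra)). lra.
Qed.

Section Setting.

Variables xi1 xi2 xi3 : R.
Hypothesis Hxi1 : -1 < xi1.
Hypothesis Hxi12 : xi1 < xi2.
Hypothesis Hxi23 : xi2 < xi3.
Hypothesis Hxi3 : xi3 < 1.

Definition weight s x := sqrt (x - xi1 + s) / (sqrt (1 - x) * sqrt (1 + x) * sqrt (x - xi1)).

Definition g_real s t x := weight s x * sqrt (x - xi2 + t) / (sqrt (x - xi2) * sqrt (xi3 - x)).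

Definition x_of th := xi2 + (xi3 - xi2) * sin th ^ 2.

Definition F s t th := 2 * weight s (x_of th) * sqrt ((xi3 - xi2) * sin th ^ 2 + t).

(* Exactly two branches, [csqrt (x - 1)] and [csqrt (x - xi3)], are imaginary on (xi2, xi3). *)
Lemma g_eq_g_real s t x : xi2 < x < xi3 -> 0 <= s -> 0 <= t ->
  g xi1 xi2 xi3 s t x = RtoC (- g_real s t x).
Proof.
  intros Hx Hs Ht. unfold g, g_real, weight.
  rewrite (csqrt_nonneg (x - xi1 + s)), (csqrt_nonneg (x - xi2 + t)), (csqrt_neg (x - 1)),
    (csqrt_nonneg (x + 1)), (csqrt_nonneg (x - xi1)), (csqrt_nonneg (x - xi2)),
    (csqrt_neg (x - xi3)) by lra.
  replace (- (x - 1)) with (1 - x) by ring. replace (- (x - xi3)) with (xi3 - x) by ring.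
  replace (1 + x) with (x + 1) by ring.
  assert (0 < sqrt (1 - x)) by (apply sqrt_lt_R0; lra).
  assert (0 < sqrt (x + 1)) by (apply sqrt_lt_R0; lra).
  assert (0 < sqrt (x - xi1)) by (apply sqrt_lt_R0; lra).
  assert (0 < sqrt (x - xi2)) by (apply sqrt_lt_R0; lra).
  assert (0 < sqrt (xi3 - x)) by (apply sqrt_lt_R0; lra).
  unfold Cdiv, Cmult, Cinv, RtoC; simpl.
  apply injective_projections; simpl; field; repeat split; try lra;
    repeat apply Rmult_integral_contrapositive_currified; lra.
Qed.

Lemma continuous_weight s x : xi1 < x < 1 -> 0 <= s -> continuous (weight s) x.
Proof.
  intros Hx Hs. apply (ex_derive_continuous (weight s)). unfold weight. auto_derive.
  repeat split; try lra.
  all: apply Rgt_not_eq; repeat apply Rmult_lt_0_compat; apply sqrt_lt_R0; lra.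
Qed.

Lemma continuous_g_real s t x : xi2 < x < xi3 -> 0 <= s -> 0 <= t ->
  continuous (g_real s t) x.
Proof.
  intros Hx Hs Ht. apply (ex_derive_continuous (g_real s t)). unfold g_real, weight.
  auto_derive. repeat split; try lra.
  all: apply Rgt_not_eq; repeat apply Rmult_lt_0_compat; apply sqrt_lt_R0; lra.
Qed.

Lemma x_of_bounds th : xi2 <= x_of th <= xi3.
Proof.
  pose proof (SIN_bound th). assert (0 <= sin th ^ 2 <= 1) by (simpl; nra).
  unfold x_of. split; nra.
Qed.

Lemma x_of_interior th : 0 < th < PI / 2 -> xi2 < x_of th < xi3.
Proof.
  intros Hth. pose proof PI_RGT_0.
  assert (0 < sin th) by (apply sin_gt_0; lra).
  assert (0 < cos th) by (apply cos_gt_0; lra).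
  pose proof (sin2_cos2 th). unfold Rsqr in *.
  assert (0 < sin th ^ 2 < 1) by (simpl; nra). unfold x_of. split; nra.
Qed.

Lemma continuous_weight_x_of s th : 0 <= s -> continuous (fun th => weight s (x_of th)) th.
Proof.
  intros Hs. pose proof (x_of_bounds th).
  apply (continuous_comp x_of (weight s)); [| apply continuous_weight; lra].
  apply (ex_derive_continuous x_of). unfold x_of. auto_derive. auto.
Qed.

Lemma continuous_F s t th : 0 <= s -> 0 <= t -> continuous (F s t) th.
Proof.
  intros Hs Ht. unfold F.
  apply (continuous_mult (fun th => 2 * weight s (x_of th))).
  - apply (continuous_mult (fun _ => 2)); [apply continuous_const |].
    now apply continuous_weight_x_of.
  - apply continuous_sqrt_comp.
    apply (ex_derive_continuous (fun th => (xi3 - xi2) * sin th ^ 2 + t)). auto_derive. auto.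
Qed.

Lemma ex_RInt_F s t a b : 0 <= s -> 0 <= t -> ex_RInt (F s t) a b.
Proof. intros. apply (ex_RInt_continuous (V := R_CompleteNormedModule)). intros. now apply continuous_F. Qed.

Lemma F_eq_g_real_x_of s t th : 0 < th < PI / 2 ->
  (2 * (xi3 - xi2) * sin th * cos th) * g_real s t (x_of th) = F s t th.
Proof.
  intros Hth. pose proof PI_RGT_0.
  assert (0 < sin th) by (apply sin_gt_0; lra).
  assert (0 < cos th) by (apply cos_gt_0; lra).
  unfold g_real, F, x_of.
  replace (xi2 + (xi3 - xi2) * sin th ^ 2 - xi2 + t) with ((xi3 - xi2) * sin th ^ 2 + t) by ring.
  replace (xi2 + (xi3 - xi2) * sin th ^ 2 - xi2) with ((xi3 - xi2) * sin th ^ 2) by ring.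
  replace (xi3 - (xi2 + (xi3 - xi2) * sin th ^ 2)) with ((xi3 - xi2) * cos th ^ 2)
    by (pose proof (sin2_cos2 th); unfold Rsqr in *; simpl; nra).
  rewrite !sqrt_mult_square by lra.
  assert (0 < sqrt (xi3 - xi2)) by (apply sqrt_lt_R0; lra).
  field_simplify_eq; [| repeat split; lra].
  rewrite pow2_sqrt by lra. ring.
Qed.

Lemma is_RInt_g_real_x_of s t th1 th2 : 0 <= s -> 0 <= t ->
  0 < th1 < PI / 2 -> 0 < th2 < PI / 2 ->
  is_RInt (g_real s t) (x_of th1) (x_of th2) (RInt (F s t) th1 th2).
Proof.
  intros Hs Ht Hth1 Hth2.
  assert (Hin : forall th, Rmin th1 th2 <= th <= Rmax th1 th2 -> 0 < th < PI / 2)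
    by (intros th; unfold Rmin, Rmax; destruct (Rle_dec th1 th2); lra).
  assert (Hsubst : is_RInt (fun th => scal (2 * (xi3 - xi2) * sin th * cos th)
                                            (g_real s t (x_of th))) th1 th2
                     (RInt (g_real s t) (x_of th1) (x_of th2))).
  { apply (is_RInt_comp (V := R_CompleteNormedModule)).
    - intros th Hth. apply continuous_g_real; auto. now apply x_of_interior, Hin.
    - intros th _. split.
      + unfold x_of. auto_derive; [auto | ring].
      + apply (ex_derive_continuous (fun th => 2 * (xi3 - xi2) * sin th * cos th)).
        auto_derive. auto. }
  replace (RInt (F s t) th1 th2) with (RInt (g_real s t) (x_of th1) (x_of th2)).
  - apply (RInt_correct (V := R_CompleteNormedModule)), (ex_RInt_continuous (V := R_CompleteNormedModule)).
    intros x Hx. pose proof (x_of_interior th1 Hth1). pose proof (x_of_interior th2 Hth2).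
    apply continuous_g_real; auto.
    unfold Rmin, Rmax in Hx. destruct (Rle_dec (x_of th1) (x_of th2)); lra.
  - symmetry. apply is_RInt_unique.
    refine (is_RInt_ext _ _ _ _ _ _ Hsubst).
    intros th Hth. apply F_eq_g_real_x_of, Hin. lra.
Qed.

Lemma x_of_near_0 a e : 0 < e <= PI / 2 -> xi2 < a < xi2 + (xi3 - xi2) * sin e ^ 2 ->
  exists th, 0 < th < e /\ x_of th = a.
Proof.
  intros He Ha.
  destruct (sin_square_onto ((a - xi2) / (xi3 - xi2)) e He) as [th [Hth Hsin]].
  { split; [apply Rdiv_lt_0_compat; lra |].
    apply (Rmult_lt_reg_r (xi3 - xi2)); [lra |]. unfold Rdiv.
    rewrite Rmult_assoc, Rinv_l by lra. lra. }
  exists th. split; [exact Hth |]. unfold x_of. rewrite Hsin. field. lra.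
Qed.

Lemma x_of_near_pi2 b e : 0 < e <= PI / 2 -> xi3 - (xi3 - xi2) * sin e ^ 2 < b < xi3 ->
  exists th, PI / 2 - e < th < PI / 2 /\ x_of th = b.
Proof.
  intros He Hb.
  destruct (x_of_near_0 (xi2 + xi3 - b) e He) as [th [Hth Hx]]; [lra |].
  exists (PI / 2 - th). split; [lra |].
  unfold x_of in *. rewrite sin_shift.
  pose proof (sin2_cos2 th). unfold Rsqr in *. simpl in *. nra.
Qed.

Lemma is_RInt_gen_g s t : 0 <= s -> 0 <= t ->
  is_RInt_gen (V := C_R_NormedModule) (g xi1 xi2 xi3 s t) (at_right xi2) (at_left xi3)
    (RtoC (- RInt (F s t) 0 (PI / 2))).
Proof.
  intros Hs Ht. pose proof PI_RGT_0.
  destruct (continuous_bounded (F s t) 0 (PI / 2)) as [M [HM HFM]];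
    [lra | intros; now apply continuous_F |].
  apply is_RInt_gen_at_right_at_left. intros eps.
  set (e := Rmin (eps / (4 * M)) (PI / 4)).
  assert (He : 0 < e <= PI / 4).
  { split; [apply Rmin_pos; [apply Rdiv_lt_0_compat; [apply cond_pos | lra] | lra] |].
    apply Rmin_r. }
  assert (HeM : e * M <= eps / 4).
  { apply (Rle_trans _ (eps / (4 * M) * M)); [apply Rmult_le_compat_r; [lra | apply Rmin_l] |].
    right. field. lra. }
  assert (Hd : 0 < (xi3 - xi2) * sin e ^ 2).
  { assert (0 < sin e) by (apply sin_gt_0; lra). apply Rmult_lt_0_compat; [lra | simpl; nra]. }
  exists (mkposreal _ Hd). simpl. intros a' b' Ha' Hb'.
  destruct (x_of_near_0 a' e ltac:(lra) Ha') as [th1 [Hth1 <-]].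
  destruct (x_of_near_pi2 b' e ltac:(lra) Hb') as [th2 [Hth2 <-]].
  exists (RtoC (- RInt (F s t) th1 th2)). split.
  - apply (is_RInt_ext (fun x => RtoC (- g_real s t x))).
    { intros x Hx. symmetry. pose proof (x_of_interior th1 ltac:(lra)).
      pose proof (x_of_interior th2 ltac:(lra)).
      apply g_eq_g_real; auto. unfold Rmin, Rmax in Hx.
      destruct (Rle_dec (x_of th1) (x_of th2)); lra. }
    apply (is_RInt_RtoC (fun x => - g_real s t x)), (is_RInt_opp (V := R_NormedModule)).
    apply is_RInt_g_real_x_of; auto; lra.
  - change (minus _ _) with (RtoC (- RInt (F s t) th1 th2) - RtoC (- RInt (F s t) 0 (PI / 2)))%C.
    rewrite <- RtoC_minus, <- Cmod_norm, Cmod_R.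
    replace (- RInt (F s t) th1 th2 - - RInt (F s t) 0 (PI / 2))
      with (- (RInt (F s t) th1 th2 - RInt (F s t) 0 (PI / 2))) by ring.
    rewrite Rabs_Ropp.
    eapply Rle_lt_trans; [apply RInt_subinterval_error; [lra | lra | apply ex_RInt_F; lra | exact HFM] |].
    pose proof (cond_pos eps). nra.
Qed.

Lemma P_eq_RInt_F s t : 0 <= s -> 0 <= t -> P xi1 xi2 xi3 s t = RtoC (RInt (F s t) 0 (PI / 2)).
Proof.
  intros Hs Ht. unfold P.
  rewrite (is_RInt_gen_unique (V := C_R_CompleteNormedModule) _ _ (is_RInt_gen_g s t Hs Ht)).
  unfold Copp, RtoC; simpl. apply injective_projections; simpl; ring.
Qed.

Lemma weight_lipschitz : exists L, 0 <= L /\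
  forall s x, 0 <= s -> xi2 <= x <= xi3 -> Rabs (weight s x - weight 0 x) <= L * s.
Proof.
  assert (Hb : 0 < sqrt (xi2 - xi1)) by (apply sqrt_lt_R0; lra).
  set (D0 := sqrt (1 - xi3) * sqrt (1 + xi2) * sqrt (xi2 - xi1)).
  assert (HD0 : 0 < D0)
    by (unfold D0; repeat apply Rmult_lt_0_compat; try apply sqrt_lt_R0; lra).
  exists (/ (sqrt (xi2 - xi1) * D0)). split; [apply Rlt_le, Rinv_0_lt_compat, Rmult_lt_0_compat; lra |].
  intros s x Hs Hx. unfold weight. rewrite Rplus_0_r.
  set (D := sqrt (1 - x) * sqrt (1 + x) * sqrt (x - xi1)).
  assert (HD : D0 <= D).
  { unfold D0, D.
    assert (sqrt (1 - xi3) <= sqrt (1 - x)) by (apply sqrt_le_1_alt; lra).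
    assert (sqrt (1 + xi2) <= sqrt (1 + x)) by (apply sqrt_le_1_alt; lra).
    assert (sqrt (xi2 - xi1) <= sqrt (x - xi1)) by (apply sqrt_le_1_alt; lra).
    assert (0 < sqrt (1 - xi3)) by (apply sqrt_lt_R0; lra).
    assert (0 < sqrt (1 + xi2)) by (apply sqrt_lt_R0; lra).
    apply Rmult_le_compat; try apply Rmult_le_compat; try apply Rmult_le_pos; lra. }
  assert (Hnum : sqrt (x - xi1 + s) - sqrt (x - xi1) <= s / sqrt (xi2 - xi1))
    by (apply sqrt_add_sub_le; try apply sqrt_le_1_alt; lra).
  assert (Hmono : sqrt (x - xi1) <= sqrt (x - xi1 + s)) by (apply sqrt_le_1_alt; lra).
  replace (sqrt (x - xi1 + s) / D - sqrt (x - xi1) / D)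
    with ((sqrt (x - xi1 + s) - sqrt (x - xi1)) / D) by (field; lra).
  rewrite Rabs_pos_eq by (apply Rdiv_le_0_compat; lra).
  apply (Rle_trans _ (s / sqrt (xi2 - xi1) / D0)).
  - apply (Rle_trans _ (s / sqrt (xi2 - xi1) / D)).
    + apply Rmult_le_compat_r; [apply Rlt_le, Rinv_0_lt_compat | ]; lra.
    + apply Rmult_le_compat_l; [apply Rdiv_le_0_compat; lra | apply Rinv_le_contravar; lra].
  - right. field. lra.
Qed.

Lemma RInt_F_lipschitz_in_s : exists C, forall s t, 0 <= s -> 0 <= t <= 1 ->
  Rabs (RInt (F s t) 0 (PI / 2) - RInt (F 0 t) 0 (PI / 2)) <= C * s.
Proof.
  pose proof PI_RGT_0. destruct weight_lipschitz as [L [HL HLs]].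
  exists (PI / 2 * (2 * L * sqrt (xi3 - xi2 + 1))).
  intros s t Hs Ht.
  assert (Hdiff : RInt (F s t) 0 (PI / 2) - RInt (F 0 t) 0 (PI / 2)
                  = RInt (fun th => F s t th - F 0 t th) 0 (PI / 2)).
  { symmetry. apply is_RInt_unique, (is_RInt_minus (V := R_NormedModule));
      apply (RInt_correct (V := R_CompleteNormedModule)), ex_RInt_F; lra. }
  rewrite Hdiff.
  apply (Rle_trans _ ((PI / 2 - 0) * (2 * (L * s) * sqrt (xi3 - xi2 + 1)))); [| right; ring].
  apply abs_RInt_le_const; [lra | |].
  - apply (ex_RInt_continuous (V := R_CompleteNormedModule)). intros.
    apply (continuous_minus (V := R_NormedModule)); apply continuous_F; lra.
  - intros th _. unfold F.
    pose proof (HLs s (x_of th) Hs (x_of_bounds th)).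
    pose proof (SIN_bound th). assert (sin th ^ 2 <= 1) by (simpl; nra).
    assert (Hsq : sqrt ((xi3 - xi2) * sin th ^ 2 + t) <= sqrt (xi3 - xi2 + 1))
      by (apply sqrt_le_1_alt; nra).
    pose proof (sqrt_pos ((xi3 - xi2) * sin th ^ 2 + t)).
    pose proof (Rabs_pos (weight s (x_of th) - weight 0 (x_of th))).
    replace (2 * weight s (x_of th) * sqrt ((xi3 - xi2) * sin th ^ 2 + t)
             - 2 * weight 0 (x_of th) * sqrt ((xi3 - xi2) * sin th ^ 2 + t))
      with (2 * (weight s (x_of th) - weight 0 (x_of th)) * sqrt ((xi3 - xi2) * sin th ^ 2 + t))
      by ring.
    rewrite !Rabs_mult, (Rabs_pos_eq 2), (Rabs_pos_eq (sqrt _)) by (try apply sqrt_pos; lra).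
    apply Rmult_le_compat; nra.
Qed.

Definition Psi th := 2 * weight 0 (x_of th) / (sqrt (xi3 - xi2) * cos th).

Lemma continuous_Psi th : 0 < cos th -> continuous Psi th.
Proof.
  intros Hcos. assert (0 < sqrt (xi3 - xi2)) by (apply sqrt_lt_R0; lra).
  apply (continuous_mult (fun th => 2 * weight 0 (x_of th))).
  - apply (continuous_mult (fun _ => 2)); [apply continuous_const |].
    apply continuous_weight_x_of; lra.
  - apply (continuous_Rinv_comp (fun th => sqrt (xi3 - xi2) * cos th)).
    + apply (ex_derive_continuous (fun th => sqrt (xi3 - xi2) * cos th)). auto_derive. auto.
    + apply Rgt_not_eq, Rmult_lt_0_compat; assumption.
Qed.

Lemma Psi_0 : Psi 0 / 4 = / (2 * sqrt (1 - xi2) * sqrt (1 + xi2) * sqrt (xi3 - xi2)).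
Proof.
  unfold Psi, weight, x_of. rewrite sin_0, cos_0.
  replace (xi2 + (xi3 - xi2) * 0 ^ 2) with xi2 by ring.
  replace (xi2 - xi1 + 0) with (xi2 - xi1) by ring.
  assert (0 < sqrt (xi3 - xi2)) by (apply sqrt_lt_R0; lra).
  assert (0 < sqrt (xi2 - xi1)) by (apply sqrt_lt_R0; lra).
  assert (0 < sqrt (1 - xi2)) by (apply sqrt_lt_R0; lra).
  assert (0 < sqrt (1 + xi2)) by (apply sqrt_lt_R0; lra).
  field. lra.
Qed.

Lemma F0_increment t th : 0 <= sin th ->
  F 0 t th - F 0 0 th
  = 2 * weight 0 (x_of th) * (sqrt ((xi3 - xi2) * sin th ^ 2 + t) - sqrt (xi3 - xi2) * sin th).
Proof. intros Hs. unfold F. rewrite Rplus_0_r, sqrt_mult_square by lra. ring. Qed.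

Lemma F0_increment_eq_Psi_sin_gap t th : 0 <= sin th -> 0 < cos th ->
  F 0 t th - F 0 0 th = Psi th * sin_gap (xi3 - xi2) t th.
Proof.
  intros Hs Hc. rewrite F0_increment by assumption. unfold Psi, sin_gap.
  assert (0 < sqrt (xi3 - xi2)) by (apply sqrt_lt_R0; lra).
  field. lra.
Qed.

Lemma Psi_near_0 eps : 0 < eps -> exists th0, 0 < th0 < PI / 2 /\
  forall th, 0 <= th <= th0 -> Rabs (Psi th - Psi 0) <= eps.
Proof.
  intros Heps. pose proof PI_RGT_0.
  destruct (continuous_Psi 0 ltac:(rewrite cos_0; lra) _ (locally_ball (Psi 0) (mkposreal eps Heps)))
    as [d Hd].
  exists (Rmin (d / 2) (PI / 4)). pose proof (cond_pos d).
  pose proof (Rmin_l (d / 2) (PI / 4)). pose proof (Rmin_r (d / 2) (PI / 4)).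
  split; [split; [apply Rmin_pos |]; lra |].
  intros th Hth. apply Rlt_le, (Hd th).
  apply Rabs_lt_between'. lra.
Qed.

Lemma RInt_F0_increment_near t th0 eps : 0 < t -> 0 < th0 < PI / 2 ->
  (forall th, 0 <= th <= th0 -> Rabs (Psi th - Psi 0) <= eps) ->
  let D := gap_primitive t (sqrt (xi3 - xi2) * sin th0) - gap_primitive t 0 in
  Rabs (RInt (fun th => F 0 t th - F 0 0 th) 0 th0 - Psi 0 * D) <= eps * D.
Proof.
  intros Ht Hth0 HPsi D. pose proof PI_RGT_0.
  assert (Hsc : forall th, 0 <= th <= th0 -> 0 <= sin th /\ 0 < cos th).
  { intros th Hth. split; [apply sin_ge_0 | apply cos_gt_0]; lra. }
  rewrite (RInt_ext _ (fun th => Psi th * sin_gap (xi3 - xi2) t th)).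
  2: { intros th Hth. rewrite Rmin_left, Rmax_right in Hth by lra.
       apply F0_increment_eq_Psi_sin_gap; apply Hsc; lra. }
  apply RInt_mult_approx; [lra | | |].
  - pose proof (is_RInt_sin_gap (xi3 - xi2) t 0 th0 ltac:(lra) Ht) as Hgap.
    rewrite sin_0, Rmult_0_r in Hgap. exact Hgap.
  - intros th Hth. split; [apply continuous_Psi, Hsc, Hth | apply continuous_sin_gap; lra].
  - intros th Hth. destruct (Hsc th Hth). split; [apply sin_gap_nonneg; lra | apply HPsi, Hth].
Qed.

Lemma RInt_F0_increment_far th0 : 0 < th0 < PI / 2 -> exists C,
  forall t, 0 < t -> Rabs (RInt (fun th => F 0 t th - F 0 0 th) th0 (PI / 2)) <= C * t.
Proof.
  intros Hth0. pose proof PI_RGT_0.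
  destruct (continuous_bounded (fun th => weight 0 (x_of th)) th0 (PI / 2)) as [Q [HQ HQb]];
    [lra | intros; apply continuous_weight_x_of; lra |].
  set (b0 := sqrt (xi3 - xi2) * sin th0).
  assert (Hb0 : 0 < b0)
    by (apply Rmult_lt_0_compat; [apply sqrt_lt_R0 | apply sin_gt_0]; lra).
  exists ((PI / 2 - th0) * (2 * Q / b0)).
  intros t Ht. rewrite Rmult_assoc. apply abs_RInt_le_const; [lra | |].
  { apply (ex_RInt_continuous (V := R_CompleteNormedModule)). intros.
    apply (continuous_minus (V := R_NormedModule)); apply continuous_F; lra. }
  intros th Hth.
  assert (Hsin : sin th0 <= sin th) by (apply sin_incr_1; lra).
  assert (0 < sin th0) by (apply sin_gt_0; lra).
  rewrite F0_increment by lra.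
  assert (Hgap : sqrt ((xi3 - xi2) * sin th ^ 2 + t) - sqrt (xi3 - xi2) * sin th <= t / b0).
  { rewrite <- sqrt_mult_square by lra. apply sqrt_add_sub_le; try lra.
    - apply Rmult_le_pos; [lra | apply pow2_ge_0].
    - rewrite sqrt_mult_square by lra. apply Rmult_le_compat_l; [apply sqrt_pos | lra]. }
  assert (Hgap0 : 0 <= sqrt ((xi3 - xi2) * sin th ^ 2 + t) - sqrt (xi3 - xi2) * sin th).
  { rewrite <- sqrt_mult_square by lra.
    enough (sqrt ((xi3 - xi2) * sin th ^ 2) <= sqrt ((xi3 - xi2) * sin th ^ 2 + t)) by lra.
    apply sqrt_le_1_alt. lra. }
  specialize (HQb th Hth). pose proof (Rabs_pos (weight 0 (x_of th))).
  rewrite !Rabs_mult, (Rabs_pos_eq 2), (Rabs_pos_eq (_ - _)) by lra.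
  replace (2 * Q / b0 * t) with (2 * Q * (t / b0)) by (field; lra).
  apply Rmult_le_compat; nra.
Qed.

Lemma RInt_F0_increment_split t th0 : 0 <= t ->
  RInt (F 0 t) 0 (PI / 2) - RInt (F 0 0) 0 (PI / 2)
  = RInt (fun th => F 0 t th - F 0 0 th) 0 th0 + RInt (fun th => F 0 t th - F 0 0 th) th0 (PI / 2).
Proof.
  intros Ht.
  assert (Hex : forall a b, ex_RInt (fun th => F 0 t th - F 0 0 th) a b).
  { intros. apply (ex_RInt_continuous (V := R_CompleteNormedModule)). intros.
    apply (continuous_minus (V := R_NormedModule)); apply continuous_F; lra. }
  pose proof (RInt_Chasles (V := R_CompleteNormedModule) _ 0 th0 (PI / 2) (Hex _ _) (Hex _ _))
    as Hch.
  simpl in Hch. unfold plus in Hch; simpl in Hch. rewrite Hch.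
  symmetry. apply is_RInt_unique, (is_RInt_minus (V := R_NormedModule));
    apply (RInt_correct (V := R_CompleteNormedModule)), ex_RInt_F; lra.
Qed.

Lemma RInt_F0_increment_estimate eps : 0 < eps -> exists A, forall t, 0 < t <= 1 ->
  Rabs ((RInt (F 0 t) 0 (PI / 2) - RInt (F 0 0) 0 (PI / 2)) - Psi 0 / 4 * (t * ln (/ t)))
  <= eps * (t * ln (/ t)) + A * t.
Proof.
  intros Heps. pose proof PI_RGT_0.
  destruct (Psi_near_0 eps Heps) as [th0 [Hth0 HPsi]].
  destruct (RInt_F0_increment_far th0 Hth0) as [Cfar Hfar].
  set (y0 := sqrt (xi3 - xi2) * sin th0).
  destruct (gap_primitive_bound y0) as [Cy Hy].
  { apply Rmult_lt_0_compat; [apply sqrt_lt_R0 | apply sin_gt_0]; lra. }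
  exists (eps * Cy + Rabs (Psi 0) * Cy + Cfar). intros t Ht.
  pose proof (RInt_F0_increment_near t th0 eps ltac:(lra) Hth0 HPsi) as Hnear. simpl in Hnear.
  fold y0 in Hnear. rewrite gap_primitive_0 in Hnear by lra.
  specialize (Hfar t ltac:(lra)). specialize (Hy t Ht).
  rewrite (RInt_F0_increment_split t th0) by lra.
  set (W := fun th => F 0 t th - F 0 0 th) in *.
  set (h := gap_primitive t y0) in *. set (L := t * ln (/ t)) in *.
  replace (RInt W 0 th0 + RInt W th0 (PI / 2) - Psi 0 / 4 * L)
    with ((RInt W 0 th0 - Psi 0 * (h - - (t / 4 * ln (/ t)))) + Psi 0 * h + RInt W th0 (PI / 2))
    by (unfold L; field).
  pose proof (Rabs_triang (RInt W 0 th0 - Psi 0 * (h - - (t / 4 * ln (/ t))) + Psi 0 * h)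
                          (RInt W th0 (PI / 2))).
  pose proof (Rabs_triang (RInt W 0 th0 - Psi 0 * (h - - (t / 4 * ln (/ t)))) (Psi 0 * h)).
  rewrite Rabs_mult in *.
  assert (Rabs (Psi 0) * Rabs h <= Rabs (Psi 0) * (Cy * t))
    by (apply Rmult_le_compat_l; [apply Rabs_pos | lra]).
  assert (eps * (h - - (t / 4 * ln (/ t))) <= eps * (Cy * t) + eps * (L / 4)).
  { pose proof (Rle_abs h). unfold L. nra. }
  assert (0 <= L).
  { unfold L. apply Rmult_le_pos; [lra |]. rewrite ln_Rinv by lra.
    pose proof (ln_le t 1 ltac:(lra) ltac:(lra)). rewrite ln_1 in *. lra. }
  nra.
Qed.

Lemma P_lipschitz_in_s : exists C, forall s t, 0 <= s -> 0 <= t <= 1 ->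
  Cmod (P xi1 xi2 xi3 s t - P xi1 xi2 xi3 0 t)%C <= C * s.
Proof.
  destruct RInt_F_lipschitz_in_s as [C HC]. exists C. intros s t Hs Ht.
  rewrite !P_eq_RInt_F by lra. rewrite <- RtoC_minus, Cmod_R. now apply HC.
Qed.

Lemma P0_asymptotics eps : 0 < eps -> exists eta, 0 < eta /\ forall t, 0 < t < eta ->
  Cmod (P xi1 xi2 xi3 0 t - P xi1 xi2 xi3 0 0
        - RtoC (/ (2 * sqrt (1 - xi2) * sqrt (1 + xi2) * sqrt (xi3 - xi2)) * (t * ln (/ t))))%C
  <= eps * (t * ln (/ t)).
Proof.
  intros Heps. rewrite <- Psi_0.
  destruct (little_o_t_ln (fun t => (RInt (F 0 t) 0 (PI / 2) - RInt (F 0 0) 0 (PI / 2))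
                                    - Psi 0 / 4 * (t * ln (/ t))))
    with eps as [eta [Heta Hsmall]]; [exact RInt_F0_increment_estimate | exact Heps |].
  exists eta. split; [exact Heta |]. intros t Ht.
  rewrite !P_eq_RInt_F by lra. rewrite <- !RtoC_minus, Cmod_R. now apply Hsmall.
Qed.

End Setting.

Theorem proposition4p4 (xi1 xi2 xi3 : R) :
  -1 < xi1 -> xi1 < xi2 -> xi2 < xi3 -> xi3 < 1 ->
  exists (a : R -> R -> C) (Cst delta : R),
    0 < delta /\
    (forall s t, 0 < s < delta -> 0 < t < delta ->
       Cmod (Cminus (Cminus (Cminus (P xi1 xi2 xi3 s t) (P xi1 xi2 xi3 0 0))
                 (RtoC (/ (2 * sqrt (1 - xi2) * sqrt (1 + xi2) * sqrt (xi3 - xi2))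
                        * (t * ln (/ t)))))
              (a s t)) <= Cst * s) /\
    (forall eps, 0 < eps -> exists eta, 0 < eta /\
       forall s t, 0 < s < eta -> 0 < t < eta ->
         Cmod (a s t) <= eps * (t * ln (/ t))).
Proof.
  intros H1 H2 H3 H4.
  set (K := / (2 * sqrt (1 - xi2) * sqrt (1 + xi2) * sqrt (xi3 - xi2))).
  exists (fun _ t => P xi1 xi2 xi3 0 t - P xi1 xi2 xi3 0 0 - RtoC (K * (t * ln (/ t))))%C.
  destruct (P_lipschitz_in_s xi1 xi2 xi3 H1 H2 H3 H4) as [C HC].
  exists C, 1. split; [lra | split].
  - intros s t Hs Ht.
    replace (Cminus _ _) with (P xi1 xi2 xi3 s t - P xi1 xi2 xi3 0 t)%C by ring.
    apply HC; lra.
  - intros eps Heps.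
    destruct (P0_asymptotics xi1 xi2 xi3 H1 H2 H3 H4 eps Heps) as [eta [Heta Hsmall]].
    exists eta. split; [exact Heta |]. intros s t _ Ht. now apply Hsmall.
Qed.
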